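(* Let $m\in A^+$ be irreducible of degree $d$, let $f(u)\in\mathbb{F}_p[u]$ be monic irreducible with a root $\alpha$, and let $n_1,n_2\ge1$ be integers with $n_1\equiv n_2\pmod{q^d-1}$. Then $B_{n_1}^{\alpha}\equiv B_{n_2}^{\alpha}\pmod m$.
   Context: Let $q$ be a power of a prime $p$, $A=\mathbb{F}_q[T]$, and $A^+$ the set of monic polynomials in $A$. For integers $n\ge1$, $i\ge0$, set $s_i(n)=\sum_{a\in A^+,\ \deg a=i} a^n\in A$. Writing $n=\sum_j a_jq^j$ with $0\le a_j\le q-1$, let $l(n)=\sum_j a_j$; it is known that $s_i(n)=0$ whenever $i>l(n)/(q-1)$, so $C_n(u)=\sum_{i\ge0}s_i(n)u^i\in A[u]$. Define $B_n(u)=C_n(u)$ if $n\not\equiv 0\pmod{q-1}$, and $B_n(u)=C_n(u)/(1-u)=\sum_{i\ge0}\big(\sum_{j=0}^i s_j(n)\big)u^i$ if $n\equiv0\pmod{q-1}$ (this lies in $A[u]$ since $C_n(1)=0$ in that case). For $\alpha$ algebraic over $\mathbb{F}_p$, let $s=[\mathbb{F}_q(\alpha):\mathbb{F}_q]$ and let $\alpha_1,\dots,\alpha_s$ be the conjugates of $\alpha$ over $\mathbb{F}_q$; define $B_n^{\alpha}=N_{\mathbb{F}_{q^s}(T)/\mathbb{F}_q(T)}(B_n(\alpha))=\prod_{i=1}^s B_n(\alpha_i)\in A$. *)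

From HB Require Import structures.
From mathcomp Require Import all_boot all_order all_algebra all_fingroup all_field.
Set Implicit Arguments. Unset Strict Implicit. Unset Printing Implicit Defensive.
Import GRing.Theory.
Local Open Scope ring_scope.

(* F plays the role of F_q, A = {poly F}, q = #|F|. *)

(* The monic polynomial of degree i with lower coefficients c:
   T^i + c_{i-1} T^{i-1} + ... + c_0.  As c ranges over {ffun 'I_i -> F},
   this enumerates the monic polynomials of degree i bijectively. *)
Definition monic_of (F : finFieldType) (i : nat) (c : {ffun 'I_i -> F}) : {poly F} :=
  'X^i + \sum_(j < i) c j *: 'X^j.

Definition s_sum (F : finFieldType) (i n : nat) : {poly F} :=
  \sum_(c : {ffun 'I_i -> F}) (monic_of c) ^+ n.

(* C_n(u) = sum_i s_i(n) u^i  in A[u] = {poly {poly F}}.  The sum is truncated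
   at i <= n, which is harmless since s_i(n) = 0 for i > l(n)/(q-1) and
   l(n)/(q-1) <= l(n) <= n. *)
Definition Cpoly (F : finFieldType) (n : nat) : {poly {poly F}} :=
  \sum_(i < n.+1) (s_sum F i n)%:P * 'X^i.

(* B_n(u) = C_n(u) if (q-1) does not divide n, and
   C_n(u)/(1-u) = sum_i (sum_{j<=i} s_j(n)) u^i otherwise (again truncated at
   i <= n, harmless since C_n has degree <= n and C_n(1) = 0 in that case). *)
Definition Bpoly (F : finFieldType) (n : nat) : {poly {poly F}} :=
  if (#|F|.-1 %| n)%N then
    \sum_(i < n.+1) (\sum_(j < i.+1) s_sum F j n)%:P * 'X^i
  else Cpoly F n.

Definition Beval (F : finFieldType) (L : fieldExtType F) (n : nat) (x : L) : {poly L} :=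
  (map_poly (map_poly (in_alg L)) (Bpoly F n)).[x%:P].

(* B_n^alpha = N_{F_q(alpha)(T)/F_q(T)} (B_n(alpha)) = prod over the conjugates
   sigma(alpha), sigma in Gal(F_q(alpha)/F_q), of B_n(sigma alpha). *)
Definition Balpha (F : finFieldType) (L : splittingFieldType F) (n : nat) (a : L)
  : {poly L} :=
  \prod_(sigma in ('Gal(<<1; a>>%VS / 1%VS))%g) Beval n (sigma a).

From HB Require Import structures.
From mathcomp Require Import all_boot all_order all_algebra all_fingroup all_field.
From mathcomp Require Import cyclic qpoly qfpoly zify.
Set Implicit Arguments. Unset Strict Implicit. Unset Printing Implicit Defensive.
Import GRing.Theory FinRing.Theory.
Local Open Scope ring_scope.

(* Every coefficient of B_n is a power sum s_i(n) or a partial sum of them,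
   and it vanishes for i > n: expanding binomially in the top coefficient of
   the summed polynomials, each term carries a factor sum_{a in F} 1 = q = 0.
   Modulo an irreducible m of degree d, a^n only depends on n mod q^d - 1
   (Fermat in the field F[T]/m), and so does whether q - 1 divides n.  Hence
   B_{n1} and B_{n2} agree coefficientwise mod m, and so do their values at
   the conjugates of alpha and the products of these values.  That product is
   invariant under Gal(F(alpha)/F), so it has coefficients in F. *)

Section CoefficientVectors.
Variable R : finComNzRingType.

Definition poly_of_ffun i (c : {ffun 'I_i -> R}) : {poly R} :=
  \sum_(j < i) c j *: 'X^j.

Definition ffun_rcons i (a : R) (c : {ffun 'I_i -> R}) : {ffun 'I_i.+1 -> R} :=
  [ffun j => if unlift ord_max j is Some k then c k else a].

Definition ffun_unrcons i (c : {ffun 'I_i.+1 -> R}) : R * {ffun 'I_i -> R} :=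
  (c ord_max, [ffun k => c (lift ord_max k)]).

Lemma ffun_rconsK i : cancel (fun ac => @ffun_rcons i ac.1 ac.2) (@ffun_unrcons i).
Proof.
case=> a c; rewrite /ffun_unrcons /ffun_rcons !ffunE unlift_none; congr (_, _).
by apply/ffunP=> k; rewrite !ffunE liftK.
Qed.

Lemma ffun_unrconsK i : cancel (@ffun_unrcons i) (fun ac => @ffun_rcons i ac.1 ac.2).
Proof.
move=> c; apply/ffunP=> j; rewrite /ffun_rcons /ffun_unrcons ffunE.
by case: unliftP => [k ->|->] //=; rewrite ffunE.
Qed.

Lemma big_ffun_rcons (V : nmodType) i (G : {ffun 'I_i.+1 -> R} -> V) :
  \sum_(c : {ffun 'I_i.+1 -> R}) G c =
  \sum_(a : R) \sum_(c : {ffun 'I_i -> R}) G (ffun_rcons a c).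
Proof.
rewrite pair_big /= (reindex (fun ac => @ffun_rcons i ac.1 ac.2)) //.
by exists (@ffun_unrcons i) => c _; [apply: ffun_rconsK | apply: ffun_unrconsK].
Qed.

Lemma poly_of_ffun_rcons i a (c : {ffun 'I_i -> R}) :
  poly_of_ffun (ffun_rcons a c) = a *: 'X^i + poly_of_ffun c.
Proof.
rewrite /poly_of_ffun big_ord_recr /= addrC ffunE unlift_none; congr (_ + _).
apply: eq_bigr => j _; rewrite ffunE.
have -> : widen_ord (leqnSn i) j = lift ord_max j.
  by apply: val_inj; rewrite /= /bump leqNgt ltn_ord.
by rewrite liftK.
Qed.

Lemma natr_card : #|R|%:R = 0 :> R.
Proof. by rewrite -zmodXgE -cardsT expg_cardG ?inE. Qed.

Lemma sum_poly_of_ffun_exp_eq0 i (y : {poly R}) k : (k < i)%N ->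
  \sum_(c : {ffun 'I_i -> R}) (y + poly_of_ffun c) ^+ k = 0.
Proof.
elim: i y k => [//|i IH] y k ltki.
rewrite big_ffun_rcons.
under eq_bigr => a _ do under eq_bigr => c _ do
  rewrite poly_of_ffun_rcons addrCA addrC exprDn.
rewrite exchange_big /=.
under eq_bigr => c _ do rewrite exchange_big /=.
rewrite exchange_big /= big1 // => j _.
under eq_bigr => c _ do under eq_bigr => a _ do rewrite -mulrnAr.
under eq_bigr => c _ do rewrite -mulr_sumr sumrMnl.
rewrite -mulr_suml.
(* For j = 0 the inner sum is sum_a 1 = q = 0; otherwise k - j < i. *)
have [j0|jpos] := posnP j.
  under [X in _ * (X *+ _)]eq_bigr => a _ do rewrite j0 expr0.
  by rewrite sumr_const -polyC_natr natr_card mul0rn mulr0.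
by rewrite IH ?mul0r //; move: (ltn_ord j) ltki jpos; lia.
Qed.

End CoefficientVectors.

Lemma expf_card_pred_dvdn (F : finFieldType) (x : F) n :
  x != 0 -> (#|F|.-1 %| n)%N -> x ^+ n = 1.
Proof.
move=> x0 /dvdnP[t ->].
have xq1 : x ^+ #|F|.-1 = 1.
  apply: (mulfI x0); rewrite mulr1 -exprS prednK ?expf_card //.
  exact: ltn_trans (finNzRing_gt1 F).
by rewrite mulnC exprM xq1 expr1n.
Qed.

Lemma expf_eq_mod (F : finFieldType) (x : F) n1 n2 : (0 < n1)%N -> (0 < n2)%N ->
  n1 = n2 %[mod #|F|.-1] -> x ^+ n1 = x ^+ n2.
Proof.
move=> n1_gt0 n2_gt0 n12; have [->|x0] := eqVneq x 0.
  by rewrite !expr0n !eqn0Ngt n1_gt0 n2_gt0.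
have xq1 := expf_card_pred_dvdn x0 (dvdnn #|F|.-1).
by rewrite -(expr_mod n1 xq1) n12 expr_mod.
Qed.

Section PowerSums.
Variable F : finFieldType.

Lemma s_sumE i n :
  s_sum F i n = \sum_(c : {ffun 'I_i -> F}) ('X^i + poly_of_ffun c) ^+ n.
Proof. by []. Qed.

Lemma s_sum_eq0 i n : (n < i)%N -> s_sum F i n = 0.
Proof. by move=> ltni; rewrite s_sumE sum_poly_of_ffun_exp_eq0. Qed.

(* Rescaling the lower coefficients by a turns monic polynomials of degree i
   into those with leading coefficient a, and a^n = 1 when q - 1 | n. *)
Lemma sum_lead_poly_of_ffun_exp i n (a : F) : a != 0 -> (#|F|.-1 %| n)%N ->
  \sum_(c : {ffun 'I_i -> F}) (a *: 'X^i + poly_of_ffun c) ^+ n = s_sum F i n.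
Proof.
move=> a0 dvd_n; rewrite s_sumE.
pose scale (c : {ffun 'I_i -> F}) := [ffun j => a * c j].
rewrite (reindex_inj (h := scale)) /=; last first.
  move=> c1 c2 /ffunP c12; apply/ffunP => j.
  by have := c12 j; rewrite !ffunE; apply: mulfI.
apply: eq_bigr => c _.
have -> : poly_of_ffun (scale c) = a *: poly_of_ffun c.
  by rewrite /poly_of_ffun scaler_sumr; apply: eq_bigr => j _; rewrite ffunE scalerA.
by rewrite -scalerDr exprZn expf_card_pred_dvdn // scale1r.
Qed.

Lemma sum_poly_of_ffun_exp i n : (0 < n)%N -> (#|F|.-1 %| n)%N ->
  \sum_(c : {ffun 'I_i -> F}) poly_of_ffun c ^+ n = - \sum_(j < i) s_sum F j n.
Proof.
move=> n_gt0 dvd_n; elim: i => [|i IH].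
  rewrite big_ord0 oppr0 big1 // => c _.
  by rewrite /poly_of_ffun big_ord0 expr0n eqn0Ngt n_gt0.
rewrite big_ffun_rcons (bigD1 0) //=.
under eq_bigr => c _ do rewrite poly_of_ffun_rcons scale0r add0r.
under [X in _ + X]eq_bigr => a _ do
  under eq_bigr => c _ do rewrite poly_of_ffun_rcons.
under [X in _ + X]eq_bigr => a a0 do rewrite sum_lead_poly_of_ffun_exp //.
have sum_units : \sum_(a : F | a != 0) (1 : {poly F}) = -1.
  have := congr1 polyC (natr_card F).
  rewrite polyC_natr polyC0 -sumr_const (bigD1 (0 : F)) //=.
  by move/eqP; rewrite addrC addr_eq0 => /eqP.
rewrite IH -[s_sum F i n]mul1r -mulr_suml sum_units big_ord_recr /=.
by rewrite mulN1r opprD.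
Qed.

Definition Bcoef n i : {poly F} :=
  if (#|F|.-1 %| n)%N then \sum_(j < i.+1) s_sum F j n else s_sum F i n.

Lemma Bcoef_eq0 n i : (0 < n)%N -> (n < i)%N -> Bcoef n i = 0.
Proof.
move=> n_gt0 lt_ni; rewrite /Bcoef; case: ifP => dvd_n; last exact: s_sum_eq0.
apply: oppr_inj; rewrite oppr0 -sum_poly_of_ffun_exp //.
under eq_bigr => c _ do rewrite -[poly_of_ffun c]add0r.
exact/sum_poly_of_ffun_exp_eq0/(ltn_trans lt_ni).
Qed.

Lemma BpolyE n N : (0 < n)%N -> (n <= N)%N ->
  Bpoly F n = \sum_(i < N.+1) (Bcoef n i)%:P * 'X^i.
Proof.
move=> n_gt0 le_nN.
have -> : Bpoly F n = \sum_(i < n.+1) (Bcoef n i)%:P * 'X^i.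
  by rewrite /Bpoly /Bcoef /Cpoly; case: ifP.
rewrite (big_ord_widen N.+1 (fun i => (Bcoef n i)%:P * 'X^i)) // big_mkcond /=.
apply: eq_bigr => i _; case: ifP => // lt_in.
by rewrite Bcoef_eq0 ?mul0r // ltnNge -ltnS lt_in.
Qed.

End PowerSums.

Section Congruences.
Variable R : idomainType.

Lemma dvdp_sumB (q : {poly R}) (I : finType) (P : pred I) (A B : I -> {poly R}) :
  (forall i, P i -> q %| A i - B i) ->
  q %| \sum_(i | P i) A i - \sum_(i | P i) B i.
Proof.
move=> qAB; rewrite -sumrB.
by apply: (big_ind (fun y => q %| y)) => [|y z|]; [exact: dvdp0|exact: dvdp_add|].
Qed.

Lemma dvdp_prodB (q : {poly R}) (I : finType) (P : pred I) (A B : I -> {poly R}) :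
  (forall i, P i -> q %| A i - B i) ->
  q %| \prod_(i | P i) A i - \prod_(i | P i) B i.
Proof.
move=> qAB; apply: (big_ind2 (fun x y => q %| x - y)) => //.
  by rewrite subrr dvdp0.
move=> x1 x2 y1 y2 qx qy.
rewrite -[x1 * y1](addrNK (x1 * y2)) -addrA -mulrBr -mulrBl.
by apply: dvdp_add; [exact: dvdp_mull | exact: dvdp_mulr].
Qed.

End Congruences.

Lemma in_qpoly_eq0 (F : fieldType) (m : {poly F}) (mI : monic_irreducible_poly m) p :
  (in_qpoly m p == 0 :> {poly %/ m with mI}) = (m %| p).
Proof.
have [_ m_monic] := mI.
apply/eqP/idP => [/val_eqP /= | dvd_mp].
  by rewrite -Pdiv.IdomainMonic.modpE mk_monicE.
by apply/val_eqP; rewrite /= -Pdiv.IdomainMonic.modpE mk_monicE.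
Qed.

(* Fermat's little theorem in F[T]/(m), a field with q^d elements. *)
Lemma dvdp_expB_mod (F : finFieldType) (m : {poly F}) d (a : {poly F}) n1 n2 :
  m \is monic -> irreducible_poly m -> size m = d.+1 ->
  (0 < n1)%N -> (0 < n2)%N -> n1 = n2 %[mod (#|F| ^ d).-1] ->
  m %| a ^+ n1 - a ^+ n2.
Proof.
move=> m_monic m_irr size_m n1_gt0 n2_gt0 n12.
have mI : monic_irreducible_poly m by split.
rewrite -(in_qpoly_eq0 mI) rmorphB !rmorphXn subr_eq0; apply/eqP.
by apply: expf_eq_mod; rewrite // card_qfpoly size_m.
Qed.

Lemma dvdp_BcoefB (F : finFieldType) (m : {poly F}) d n1 n2 i :
  m \is monic -> irreducible_poly m -> size m = d.+1 ->
  (0 < n1)%N -> (0 < n2)%N -> n1 = n2 %[mod (#|F| ^ d).-1] ->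
  m %| Bcoef F n1 i - Bcoef F n2 i.
Proof.
move=> m_monic m_irr size_m n1_gt0 n2_gt0 n12.
have s_sumB j : m %| s_sum F j n1 - s_sum F j n2.
  by apply: dvdp_sumB => c _; apply: (dvdp_expB_mod _ m_monic m_irr size_m).
have dvd12 : (#|F|.-1 %| n1)%N = (#|F|.-1 %| n2)%N.
  have dvd_q := dvdn_pred_predX #|F| d.
  by rewrite /dvdn -(modn_dvdm n1 dvd_q) -(modn_dvdm n2 dvd_q) n12.
by rewrite /Bcoef dvd12; case: ifP => _ //; apply: dvdp_sumB.
Qed.

Section Norm.
Variables (F : finFieldType) (L : splittingFieldType F).
Local Notation phi := (map_poly (in_alg L)).

Lemma BevalE n N (x : L) : (0 < n)%N -> (n <= N)%N ->
  Beval n x = \sum_(i < N.+1) phi (Bcoef F n i) * x%:P ^+ i.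
Proof.
move=> n_gt0 le_nN; rewrite /Beval (BpolyE F n_gt0 le_nN) rmorph_sum horner_sum.
apply: eq_bigr => i _.
by rewrite rmorphM /= map_polyC map_polyXn hornerM hornerC hornerXn.
Qed.

Lemma dvdp_BevalB (m : {poly F}) d n1 n2 (x : L) :
  m \is monic -> irreducible_poly m -> size m = d.+1 ->
  (0 < n1)%N -> (0 < n2)%N -> n1 = n2 %[mod (#|F| ^ d).-1] ->
  phi m %| Beval n1 x - Beval n2 x.
Proof.
move=> m_monic m_irr size_m n1_gt0 n2_gt0 n12.
rewrite (BevalE x n1_gt0 (leq_maxl n1 n2)) (BevalE x n2_gt0 (leq_maxr n1 n2)).
apply: dvdp_sumB => i _; rewrite -mulrBl -rmorphB; apply: dvdp_mulr.
by rewrite dvdp_map (dvdp_BcoefB _ m_monic m_irr size_m n1_gt0 n2_gt0 n12).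
Qed.

Lemma map_in_alg_polyOver (b : {poly F}) (K : {subfield L}) : phi b \is a polyOver K.
Proof. by apply: (polyOverS (subvP (sub1v K))); apply/polyOver1P; exists b. Qed.

Lemma Beval_polyOver n (K : {subfield L}) x : (0 < n)%N -> x \in K ->
  Beval n x \is a polyOver K.
Proof.
move=> n_gt0 xK; rewrite (BevalE _ n_gt0 (leqnn n)).
apply: rpred_sum => i _; rewrite rpredM ?map_in_alg_polyOver //.
by rewrite rpredX ?polyOverC.
Qed.

Lemma map_Beval (E : {subfield L}) (t : gal_of E) n x : (0 < n)%N ->
  t \in 'Gal(E / 1%AS)%g -> map_poly t (Beval n x) = Beval n (t x).
Proof.
move=> n_gt0 tG; rewrite !(BevalE _ n_gt0 (leqnn n)) rmorph_sum.
apply: eq_bigr => i _; rewrite rmorphM rmorphXn /= map_polyC /=.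
by rewrite (fixedPoly_gal (sub1v E) tG (map_in_alg_polyOver _ _)).
Qed.

Lemma polyOver_fixed (K E : {subfield L}) (p : {poly L}) : galois K E ->
  p \is a polyOver E -> (forall t, t \in 'Gal(E / K)%g -> map_poly t p = p) ->
  p \is a polyOver K.
Proof.
move=> /galois_fixedField fixE pE p_fixed; apply/polyOverP => i; rewrite -fixE.
apply/fixedFieldP; first exact: (polyOverP pE).
by move=> t tG; rewrite -{2}(p_fixed t tG) coef_map.
Qed.

Lemma Balpha_polyOver1 n (a : L) : (0 < n)%N -> Balpha n a \is a polyOver 1%VS.
Proof.
move=> n_gt0; pose E : {subfield L} := <<1; a>>%AS.
apply: (@polyOver_fixed 1%AS E); first exact/finField_galois/sub1v.
  apply: rpred_prod => s _; apply: Beval_polyOver => //.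
  exact/memv_gal/memv_adjoin.
move=> t tG; rewrite /Balpha rmorph_prod.
rewrite (eq_bigr (fun s => Beval n ((s * t)%g a))); last first.
  by move=> s _; rewrite galM ?memv_adjoin //; apply: map_Beval.
by rewrite [RHS](reindex_inj (mulIg t)) /=; apply: eq_bigl => s; rewrite groupMr.
Qed.

End Norm.

Theorem lemma5p1 (p : nat) (F : finFieldType) (L : splittingFieldType F)
  (m : {poly F}) (d : nat) (f : {poly 'F_p}) (alpha : L) (n1 n2 : nat) :
  prime p -> (p \in [pchar F])%N ->
  m \is monic -> irreducible_poly m -> size m = d.+1 ->
  f \is monic -> irreducible_poly f ->
  root (map_poly (fun c : 'F_p => (nat_of_ord c)%:R : L) f) alpha ->
  (0 < n1)%N -> (0 < n2)%N ->
  n1 = n2 %[mod (#|F| ^ d).-1] ->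
  exists b1 b2 : {poly F},
    [/\ map_poly (in_alg L) b1 = Balpha n1 alpha,
        map_poly (in_alg L) b2 = Balpha n2 alpha
      & m %| b1 - b2].
Proof.
(* The hypotheses on p and f only say that alpha is algebraic over F_p, which
   every element of the finite extension L is. *)
move=> _ _ m_monic m_irr size_m _ _ _ n1_gt0 n2_gt0 n12.
have [b1 Bb1] := polyOver1P (Balpha_polyOver1 alpha n1_gt0).
have [b2 Bb2] := polyOver1P (Balpha_polyOver1 alpha n2_gt0).
exists b1, b2; split; [by [] | by [] |].
rewrite -(dvdp_map (in_alg L)) rmorphB /= -Bb1 -Bb2.
by apply: dvdp_prodB => s _; apply: dvdp_BevalB m_monic m_irr size_m _ _ n12.
Qed.
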